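(* Let $p$ be a prime and $m$ a positive integer with $m+2\le p$. Let $B$ be a finite left brace with $(B,+)\cong \mathbb{Z}/(p^{\alpha_1})\times\cdots\times\mathbb{Z}/(p^{\alpha_m})$ for integers $1\le\alpha_1\le\cdots\le\alpha_m$. For $i\ge 0$ let $\Omega_i(B,+)=\{x\in B: p^ix=0\}$. Then for every $i\ge1$ and every $a\in\Omega_{i+1}(B,+)\setminus\Omega_i(B,+)$, the $p$-th power $a^p$ of $a$ in $(B,\cdot)$ satisfies $a^p\in\Omega_i(B,+)\setminus\Omega_{i-1}(B,+)$.
   Context: A left brace is a set $B$ with two binary operations $+$ and $\cdot$ such that $(B,+)$ is an abelian group, $(B,\cdot)$ is a group, and $a\cdot(b+c)+a=a\cdot b+a\cdot c$ for all $a,b,c\in B$. $a^p$ denotes $a\cdot a\cdots a$ ($p$ factors) in $(B,\cdot)$. *)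

From HB Require Import structures.
From mathcomp Require Import all_boot all_order all_algebra.
Set Implicit Arguments. Unset Strict Implicit. Unset Printing Implicit Defensive.
Import GRing.Theory.
Local Open Scope ring_scope.

Definition is_left_brace (B : zmodType) (mul : B -> B -> B) (one : B)
    (inv : B -> B) : Prop :=
  [/\ (forall a b c, mul a (mul b c) = mul (mul a b) c),
      (forall a, mul one a = a /\ mul a one = a),
      (forall a, mul (inv a) a = one /\ mul a (inv a) = one)
    & (forall a b c, mul a (b + c) + a = mul a b + mul a c)].

Definition bpow (B : Type) (mul : B -> B -> B) (one : B) (a : B) (n : nat) : B :=
  iter n (mul a) one.

Definition Omega (B : zmodType) (p i : nat) : pred B :=
  [pred x : B | x *+ (p ^ i)%N == 0].

Definition add_iso_prod_cyclic (B : zmodType) (p m : nat) (alpha : 'I_m -> nat) : Prop :=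
  exists f : B -> forall i : 'I_m, 'Z_(p ^ alpha i),
    [/\ injective f,
        (forall y : forall i : 'I_m, 'Z_(p ^ alpha i),
            exists x, forall i, f x i = y i)
      & (forall x y i, f (x + y) i = f x i + f y i)].

(* For a in B the map lambda_a x = -a + a x is additive and a |-> lambda_a is a
   homomorphism, so a^n = sum_(k<n) lambda_a^k a; with E = lambda_a - 1 this reads
   a^p = sum_(j<p) C(p, j+1) E^j a.  As (B, .) is a p-group, lambda_a has p-power
   order, and the Frobenius identity (1 + E)^p = 1 + E^p on Omega_1 makes E
   nilpotent there.  The kernels of E^k in Omega_1 are subgroups growing by a
   factor p at every strict step, and |Omega_1| <= p^m, so E^m = 0 on Omega_1.
   Since m <= p - 2, multiplying a^p by p^i kills every term of the sum (the
   binomials are divisible by p, the last term is E^(p-1)), while applying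
   E^(r-1) to p^(i-1) a^p, where r is the nilpotency index of p^i a, leaves only
   E^(r-1) (p^i a) <> 0. *)

From mathcomp Require Import all_boot all_algebra all_fingroup all_solvable.
From mathcomp Require Import zify.
From Stdlib Require Import FunctionalExtensionality.
Set Implicit Arguments. Unset Strict Implicit. Unset Printing Implicit Defensive.
Import GRing.Theory.
Local Open Scope ring_scope.

Definition additive_map (B : zmodType) (g : B -> B) := {morph g : x y / x + y}.

Section AdditiveMap.
Variables (B : zmodType) (g : B -> B).
Hypothesis gD : additive_map g.

Lemma additive_map0 : g 0 = 0.
Proof. by apply: (addrI (g 0)); rewrite -gD !addr0. Qed.

Lemma additive_mapMn x n : g (x *+ n) = g x *+ n.
Proof. by elim: n => [|n IHn]; rewrite ?mulr0n ?additive_map0 // !mulrS gD IHn. Qed.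

Lemma additive_map_sum (I : finType) (F : I -> B) :
  g (\sum_(i : I) F i) = \sum_(i : I) g (F i).
Proof. exact: (big_morph g gD additive_map0). Qed.

Lemma additive_map_iter k : additive_map (iter k g).
Proof. by elim: k => [|k IHk] x y //=; rewrite IHk gD. Qed.

Lemma additive_map_subid : additive_map (fun y => g y - y).
Proof. by move=> x y; rewrite gD opprD addrACA. Qed.

Lemma additive_map_char p x : x *+ p = 0 -> g x *+ p = 0.
Proof. by move=> xp; rewrite -additive_mapMn xp additive_map0. Qed.

End AdditiveMap.

Section IterBinomial.
Variables (B : zmodType) (M : B -> B).
Hypothesis MD : additive_map M.
Let E y := M y - y.

Lemma iter_subidS j x : M (iter j E x) = iter j.+1 E x + iter j E x.
Proof. by rewrite iterS /E subrK. Qed.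

Lemma iter_binomial n x : iter n M x = \sum_(j < n.+1) iter j E x *+ 'C(n, j).
Proof.
elim: n => [|n IHn]; first by rewrite big_ord1 mulr1n.
rewrite iterS IHn additive_map_sum //.
under eq_bigr do rewrite additive_mapMn // iter_subidS mulrnDl.
rewrite big_split [RHS]big_ord_recl.
under [X in _ = _ + X]eq_bigr do rewrite lift0 binS mulrnDr.
rewrite big_split /= [X in _ + X = _]big_ord_recl [X in _ = _ + (X + _)]big_ord_recr /=.
rewrite (bin_small (ltnSn n)) mulr0n addr0 !bin0.
by rewrite addrCA; congr (_ + _); rewrite addrC.
Qed.

Lemma sum_iter_binomial n x :
  \sum_(k < n) iter k M x = \sum_(j < n) iter j E x *+ 'C(n, j.+1).
Proof.
elim: n => [|n IHn]; first by rewrite !big_ord0.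
rewrite big_ord_recl.
under eq_bigr do rewrite lift0 iterS.
rewrite -(additive_map_sum MD (fun i : 'I_n => iter i M x)) IHn additive_map_sum //.
under eq_bigr do rewrite additive_mapMn // iter_subidS mulrnDl.
under [RHS]eq_bigr do rewrite binS mulrnDr.
rewrite !big_split /= [X in _ = X + _]big_ord_recr [X in _ = _ + X]big_ord_recl /=.
rewrite (bin_small (ltnSn n)) mulr0n addr0 bin0 mulr1n.
by rewrite [RHS]addrC -addrA.
Qed.
End IterBinomial.

Lemma eq_in_iter (T : Type) (S : pred T) (f g : T -> T) :
  {homo f : x / x \in S} -> {in S, f =1 g} -> forall n, {in S, iter n f =1 iter n g}.
Proof.
move=> fS eq_fg n x xS; elim: n => //= n IHn.
by rewrite -IHn eq_fg // (iter_in n fS).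
Qed.

Lemma mulrn_dvdn_eq0 (B : zmodType) (y : B) p n : y *+ p = 0 -> (p %| n)%N -> y *+ n = 0.
Proof. by move=> yp /dvdnP[q ->]; rewrite mulnC mulrnA yp mul0rn. Qed.

Lemma iter_prime_char (B : zmodType) p (M : B -> B) x :
    prime p -> additive_map M -> x *+ p = 0 ->
  iter p M x = x + iter p (fun y => M y - y) x.
Proof.
move=> p_pr MD xp; rewrite iter_binomial //.
have [q def_p] : exists q, p = q.+1 by exists p.-1; rewrite prednK ?prime_gt0.
rewrite def_p big_ord_recl big_ord_recr /= bin0 binn !mulr1n -def_p big1 ?add0r //.
move=> j _; apply: (mulrn_dvdn_eq0 (p := p)).
  exact (additive_map_char (additive_map_iter (additive_map_subid MD) j.+1) xp).
by apply: prime_dvd_bin; rewrite // def_p /bump /= ltnS ltn_ord.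
Qed.

Lemma iter_subid_expn (B : zmodType) p (M : B -> B) t x :
    prime p -> additive_map M -> x *+ p = 0 ->
  iter (p ^ t) (fun y => M y - y) x = iter (p ^ t) M x - x.
Proof.
move=> p_pr MD; elim: t x => [|t IHt] x xp; first by rewrite expn0.
have MtD := additive_map_iter MD (p ^ t).
rewrite expnS !iterM (iter_prime_char p_pr MtD xp) addrAC subrr add0r.
apply: (eq_in_iter (S := [pred y | y *+ p == 0])); last by rewrite inE xp.
  move=> y; rewrite !inE => /eqP yp; apply/eqP.
  exact (additive_map_char (additive_map_iter (additive_map_subid MD) _) yp).
by move=> y /eqP; apply: IHt.
Qed.

Lemma pgroup_proper_card (gT : finGroupType) (p : nat) (H K : {group gT}) :
  (p.-group K)%g -> H \proper K -> (p * #|H| <= #|K|)%N.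
Proof.
move=> pK /andP[sHK not_sKH].
rewrite -(Lagrange sHK) mulnC leq_mul2l; apply/orP; right.
have [e def_e] := p_natP (pnat_dvd (dvdn_indexg K H) pK).
have := indexg_gt1 K H; rewrite not_sKH def_e.
case: e {def_e} => [|e] // _; rewrite expnS.
by case: p {pK} => // p; rewrite leq_pmulr ?expn_gt0.
Qed.

Section KernelChain.
Variables (B : finZmodType) (p N : nat) (E : B -> B).
Hypotheses (ED : additive_map E) (pB : (p.-group [set: B])%g)
  (E_nil : forall x : B, x *+ p = 0 -> iter N E x = 0).

Definition Omega1 : {set B} := [set x | x *+ p == 0].
Definition ker_iter k : {set B} := [set x | (x *+ p == 0) && (iter k E x == 0)].

Fact ker_iter_group_set k : group_set (ker_iter k).
Proof.
apply/group_setP; split.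
  by rewrite inE mul0rn (additive_map0 (additive_map_iter ED k)) eqxx.
move=> x y; rewrite !inE => /andP[/eqP xp /eqP Ex] /andP[/eqP yp /eqP Ey].
by rewrite FinRing.zmodMgE mulrnDl xp yp (additive_map_iter ED k) Ex Ey !addr0 eqxx.
Qed.
Canonical ker_iter_group k := Group (ker_iter_group_set k).

Lemma ker_iter_sub_Omega1 k : ker_iter k \subset Omega1.
Proof. by apply/subsetP => x; rewrite !inE => /andP[]. Qed.

Lemma ker_iter_subS k : ker_iter k \subset ker_iter k.+1.
Proof.
apply/subsetP => x; rewrite !inE => /andP[-> /eqP Ex] /=.
by rewrite Ex (additive_map0 ED).
Qed.

Lemma ker_iter_stable_eq0 k j x : ker_iter k = ker_iter k.+1 ->
  x *+ p = 0 -> iter (k + j) E x = 0 -> iter k E x = 0.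
Proof.
move=> kerS xp; elim: j => [|j IHj]; first by rewrite addn0.
rewrite -addSnnS iterD => Ejx; apply: IHj; rewrite iterD.
have: iter j E x \in ker_iter k.+1.
  rewrite inE Ejx eqxx andbT.
  exact/eqP/(additive_map_char (additive_map_iter ED j) xp).
by rewrite -kerS inE => /andP[_ /eqP].
Qed.

Lemma ker_iter_stable k : ker_iter k = ker_iter k.+1 -> ker_iter k = Omega1.
Proof.
move=> kerS; apply/eqP; rewrite eqEsubset ker_iter_sub_Omega1; apply/subsetP => x.
rewrite !inE => /eqP xp; rewrite xp eqxx /=; apply/eqP.
apply: (ker_iter_stable_eq0 (j := N) kerS xp).
by rewrite iterD E_nil // (additive_map0 (additive_map_iter ED k)).
Qed.

Lemma ker_iter_card_or_full k : (p ^ k <= #|ker_iter k|)%N \/ ker_iter k = Omega1.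
Proof.
elim: k => [|k [le_pk_ker | kerO]].
- by left; apply/card_gt0P; exists 0; rewrite inE mul0rn eqxx.
- have [kerS | ker_neq] := eqVneq (ker_iter k) (ker_iter k.+1).
    by right; rewrite -kerS ker_iter_stable.
  left; rewrite expnS; apply: leq_trans (leq_mul (leqnn p) le_pk_ker) _.
  apply: pgroup_proper_card; first exact: pgroupS (subsetT _) pB.
  by rewrite properEneq ker_neq ker_iter_subS.
- by right; apply/eqP; rewrite eqEsubset ker_iter_sub_Omega1 -kerO ker_iter_subS.
Qed.

Lemma iter_nilpotent_bound m : (#|Omega1| <= p ^ m)%N ->
  forall x : B, x *+ p = 0 -> iter m E x = 0.
Proof.
move=> card_O x xp.
suff: x \in ker_iter m by rewrite inE => /andP[_ /eqP].
suff ->: ker_iter m = Omega1 by rewrite inE xp.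
have [le_pm_ker | //] := ker_iter_card_or_full m.
apply/eqP; rewrite eqEcard ker_iter_sub_Omega1.
exact: leq_trans card_O le_pm_ker.
Qed.
End KernelChain.

Lemma Zp_char_dvd p n (z : 'Z_(p ^ n)) : prime p -> (0 < n)%N -> z *+ p = 0 ->
  (p ^ n.-1 %| z)%N /\ (z %/ p ^ n.-1 < p)%N.
Proof.
move=> p_pr n_gt0 zp.
have pn_gt1 : (1 < p ^ n)%N by rewrite -(expn0 p) ltn_exp2l ?prime_gt1.
have def_pn : (p ^ n = p ^ n.-1 * p)%N by rewrite -expnSr prednK.
have z_lt : (z < p ^ n)%N by rewrite -[X in (_ < X)%N](Zp_cast pn_gt1) ltn_ord.
have := congr1 val zp; rewrite Zp_mulrn /=.
move: (nat_of_ord z) z_lt => v v_lt; rewrite Zp_cast // => /eqP.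
rewrite -/(dvdn _ _) {1}def_pn dvdn_pmul2r ?prime_gt0 // => dvd_v; split=> //.
by rewrite ltn_divLR ?expn_gt0 ?prime_gt0 // mulnC -def_pn.
Qed.

Section ProductOfCyclic.
Variables (B : finZmodType) (p m : nat) (alpha : 'I_m -> nat).
Variable f : B -> forall i : 'I_m, 'Z_(p ^ alpha i).
Hypotheses (p_pr : prime p) (alpha_gt0 : forall i, (0 < alpha i)%N).
Hypotheses (f_inj : injective f) (fD : forall x y i, f (x + y) i = f x i + f y i).

Lemma prod_cyclic0 i : f 0 i = 0.
Proof. by apply: (addrI (f 0 i)); rewrite -fD !addr0. Qed.

Lemma prod_cyclicMn x n i : f (x *+ n) i = f x i *+ n.
Proof. by elim: n => [|n IHn]; rewrite ?mulr0n ?prod_cyclic0 // !mulrS fD IHn. Qed.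

(* alpha_gt0 matters: 'Z_1 is 'Z_2 in MathComp, so p ^ alpha i must exceed 1. *)
Lemma prod_cyclic_pgroup : (p.-group [set: B])%g.
Proof.
have pn_gt1 i : (1 < p ^ alpha i)%N by rewrite -(expn0 p) ltn_exp2l ?prime_gt1.
pose K := (\sum_(i < m) alpha i)%N.
rewrite -(pnat_exponent p [set: B]%G); apply: (@pnat_dvd _ (p ^ K)%N).
  apply/exponentP => x _; rewrite FinRing.zmodXgE; apply: f_inj.
  apply: functional_extensionality_dep => i; rewrite prod_cyclic0 prod_cyclicMn.
  have le_alpha_K : (alpha i <= K)%N by rewrite /K (bigD1 i) //= leq_addr.
  by rewrite -(subnK le_alpha_K) expnD mulrnA -mulr_natr pchar_Zp // mulr0.
by rewrite pnatX pnat_id.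
Qed.

Lemma prod_cyclic_card_Omega1 : (#|Omega1 B p| <= p ^ m)%N.
Proof.
have [q def_p] : exists q, p = q.+1 by exists p.-1; rewrite prednK ?prime_gt0.
pose digits x : {ffun 'I_m -> 'I_q.+1} :=
  [ffun i => inord (f x i %/ p ^ (alpha i).-1)].
suff /card_in_imset <-: {in Omega1 B p &, injective digits}.
  by rewrite (leq_trans (max_card _)) // card_ffun !card_ord def_p.
move=> x y; rewrite !inE => /eqP xp /eqP yp eq_d.
apply: f_inj; apply: functional_extensionality_dep => i; apply: val_inj => /=.
have f_char z : z *+ p = 0 -> f z i *+ p = 0.
  by move=> zp; rewrite -prod_cyclicMn zp prod_cyclic0.
have [dvd_x lt_x] := Zp_char_dvd p_pr (alpha_gt0 i) (f_char x xp).
have [dvd_y lt_y] := Zp_char_dvd p_pr (alpha_gt0 i) (f_char y yp).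
have := congr1 (fun d : {ffun 'I_m -> 'I_q.+1} => val (d i)) eq_d.
rewrite /= !ffunE !inordK -?def_p // => eq_q.
by rewrite -(divnK dvd_x) -(divnK dvd_y) eq_q.
Qed.
End ProductOfCyclic.

Section PrimePowerSum.
Variables (B : zmodType) (p m : nat) (E : B -> B).
Hypotheses (p_pr : prime p) (ED : additive_map E)
  (E_nil : forall x, x *+ p = 0 -> iter m E x = 0).

Definition pth_power_sum y := \sum_(j < p) iter j E y *+ 'C(p, j.+1).

Lemma pth_power_sumMn y n : pth_power_sum (y *+ n) = pth_power_sum y *+ n.
Proof.
rewrite /pth_power_sum -sumrMnl; apply: eq_bigr => j _.
by rewrite (additive_mapMn (additive_map_iter ED j)) mulrnAC.
Qed.

Lemma mulrn_bin_prime_eq0 (z : B) j : z *+ p = 0 -> (0 < j < p)%N -> z *+ 'C(p, j) = 0.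
Proof. by move=> zp j_bounds; apply: mulrn_dvdn_eq0 zp _; apply: prime_dvd_bin. Qed.

Lemma iter_nil_ge k z : (m <= k)%N -> z *+ p = 0 -> iter k E z = 0.
Proof.
move=> le_mk zp; rewrite -(subnK le_mk) iterD E_nil //.
exact: additive_map0 (additive_map_iter ED _).
Qed.

Hypothesis le_m_p : (m + 2 <= p)%N.

Lemma pth_power_sum_char y : y *+ p = 0 -> pth_power_sum y = 0.
Proof.
move=> yp; apply: big1 => j _; have [lt_jp | le_pj] := ltnP j.+1 p.
  by rewrite mulrn_bin_prime_eq0 ?lt_jp // (additive_map_char (additive_map_iter ED j) yp).
by rewrite iter_nil_ge ?mul0rn //; move: (ltn_ord j) le_pj le_m_p; lia.
Qed.

Lemma iter_pth_power_sum r c : iter r.+1 E (c *+ p) = 0 ->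
  iter r E (pth_power_sum c) = iter r E (c *+ p).
Proof.
move=> Erc; have ErD := additive_map_iter ED r.
set z := iter r.+1 E c.
have zp : z *+ p = 0 by rewrite -(additive_mapMn (additive_map_iter ED _)).
have [q def_p] : exists q, p = q.+1 by exists p.-1; rewrite prednK ?prime_gt0.
rewrite /pth_power_sum (additive_map_sum ErD) def_p big_ord_recl /= bin1 -def_p.
rewrite big1 ?addr0 // => j _.
rewrite (additive_mapMn ErD) -iterS add0n -iterD addnC addSnnS iterD -/z /bump add1n.
have [lt_jp | le_pj] := ltnP j.+2 p.
  by rewrite mulrn_bin_prime_eq0 ?lt_jp // (additive_map_char (additive_map_iter ED j) zp).
by rewrite iter_nil_ge ?mul0rn //; move: (ltn_ord j) le_pj le_m_p; rewrite def_p; lia.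
Qed.

Lemma pth_power_sum_neq0 c : c *+ p != 0 -> c *+ p *+ p = 0 -> pth_power_sum c != 0.
Proof.
move=> cp_neq0 cpp.
have: exists r, iter r E (c *+ p) == 0 by exists m; rewrite E_nil.
case/ex_minnP=> [[|r] Erc min_r]; first by case/negP: cp_neq0.
apply/eqP => Sc0; have := min_r r.
rewrite -(iter_pth_power_sum (eqP Erc)) Sc0 (additive_map0 (additive_map_iter ED r)).
by rewrite eqxx ltnn => /(_ isT).
Qed.
End PrimePowerSum.

Section BraceLambda.
Variables (B : zmodType) (mul : B -> B -> B) (one : B) (inv : B -> B).
Hypothesis braceB : is_left_brace mul one inv.

Let mulA a b c : mul a (mul b c) = mul (mul a b) c. Proof. by case: braceB. Qed.
Let mul1 a : mul one a = a. Proof. by case: braceB => _ h1 _ _; case: (h1 a). Qed.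
Let mulD a b c : mul a (b + c) = mul a b + mul a c - a.
Proof. by case: braceB => _ _ _ /(_ a b c) <-; rewrite addrK. Qed.

Lemma brace_mulr0 a : mul a 0 = a.
Proof.
by have := mulD a 0 0; rewrite addr0 => /eqP; rewrite eq_sym subr_eq => /eqP/addrI.
Qed.

Lemma brace_one : one = 0.
Proof. by rewrite -(mul1 0) brace_mulr0. Qed.

Lemma brace_mulrN a b : mul a (- b) = a + a - mul a b.
Proof.
have := mulD a b (- b); rewrite subrr brace_mulr0 => /eqP.
by rewrite eq_sym subr_eq addrC => /eqP <-; rewrite addrK.
Qed.

Definition brace_lambda a x := - a + mul a x.

Lemma brace_lambda_additive a : additive_map (brace_lambda a).
Proof. by move=> x y; rewrite /brace_lambda mulD [RHS]addrACA [LHS]addrCA addrC. Qed.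

Lemma brace_lambdaM a b x :
  brace_lambda (mul a b) x = brace_lambda a (brace_lambda b x).
Proof.
rewrite /brace_lambda mulD brace_mulrN mulA.
by rewrite [X in _ = _ + X]addrAC [X in _ = _ + (X + _)]addrAC addrK addrA addKr.
Qed.

Lemma brace_lambda1 x : brace_lambda one x = x.
Proof. by rewrite /brace_lambda mul1 brace_one oppr0 add0r. Qed.

Lemma iter_brace_lambda a n x :
  iter n (brace_lambda a) x = brace_lambda (bpow mul one a n) x.
Proof. by elim: n x => [|n IHn] x /=; rewrite ?brace_lambda1 // IHn -brace_lambdaM. Qed.

Lemma bpow_sum_iter_lambda a n :
  bpow mul one a n = \sum_(k < n) iter k (brace_lambda a) a.
Proof.
elim: n => [|n IHn]; first by rewrite big_ord0 brace_one.
rewrite big_ord_recl.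
under eq_bigr do rewrite lift0 iterS.
rewrite -(additive_map_sum (brace_lambda_additive a) (fun k : 'I_n => iter k _ a)) -IHn.
by rewrite /brace_lambda addrA subrr add0r.
Qed.
End BraceLambda.

Section FiniteGroupExponent.
Variables (T : finType) (mul : T -> T -> T) (one : T) (inv : T -> T).
Hypotheses (mulA : associative mul) (mul1 : left_id one mul) (mulr1 : right_id one mul)
  (mulV : left_inverse one inv mul).

Let mul_inj a : injective (mul a).
Proof. by move=> x y /(congr1 (mul (inv a))); rewrite !mulA mulV !mul1. Qed.

Let lmul a : {perm T} := perm (@mul_inj a).

Lemma bpow_card a : bpow mul one a #|T| = one.
Proof.
have lmulM b c : lmul (mul b c) = (lmul c * lmul b)%g.
  by apply/permP => x; rewrite permM !permE mulA.
have lmul_inj : injective lmul.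
  by move=> b c /(congr1 (fun s : {perm T} => s one)); rewrite !permE !mulr1.
have G_group : group_set [set lmul b | b : T].
  apply/group_setP; split.
    by apply/imsetP; exists one => //; apply/permP => x; rewrite perm1 permE mul1.
  by move=> _ _ /imsetP[b _ ->] /imsetP[c _ ->]; rewrite -lmulM imset_f.
have aG : lmul a \in Group G_group by rewrite /= imset_f.
have := order_dvdG aG; rewrite /= card_imset // order_dvdn => /eqP lmul_a_card.
have := congr1 (fun s : {perm T} => s one) lmul_a_card.
rewrite permX perm1 => lmul_one; rewrite -[in RHS]lmul_one /bpow.
by apply: eq_iter => x; rewrite permE.
Qed.
End FiniteGroupExponent.

Lemma brace_bpow_card (B : finZmodType) (mul : B -> B -> B) one inv :
  is_left_brace mul one inv -> forall a, bpow mul one a #|B| = one.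
Proof.
case=> mulA mul1 mulV _ a.
by apply: (bpow_card (inv := inv)) => // x;
  [case: (mul1 x) | case: (mul1 x) | case: (mulV x)].
Qed.

Unset Implicit Arguments.

Theorem mainTheorem6 (p m : nat) (B : finZmodType)
    (mul : B -> B -> B) (one : B) (inv : B -> B) (alpha : 'I_m -> nat) :
  prime p -> (0 < m)%N -> (m + 2 <= p)%N ->
  is_left_brace mul one inv ->
  (forall i : 'I_m, (1 <= alpha i)%N) ->
  (forall i j : 'I_m, (i <= j)%N -> (alpha i <= alpha j)%N) ->
  @add_iso_prod_cyclic B p m alpha ->
  forall (i : nat) (a : B), (1 <= i)%N ->
    a \in Omega p i.+1 -> a \notin Omega p i ->
    bpow mul one a p \in Omega p i /\ bpow mul one a p \notin Omega p i.-1.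
Proof.
move=> p_pr _ le_m_p braceB alpha_gt0 _ [f [f_inj _ fD]] i a i_gt0.
rewrite !inE => /eqP a_i1 a_i.
have pB := prod_cyclic_pgroup p_pr alpha_gt0 f_inj fD.
have lamD := brace_lambda_additive braceB a.
pose E y := brace_lambda mul a y - y.
have ED : additive_map E := additive_map_subid lamD.
have E_nil x : x *+ p = 0 -> iter m E x = 0.
  apply: (iter_nilpotent_bound (N := p ^ logn p #|[set: B]|) ED pB _
           (prod_cyclic_card_Omega1 p_pr alpha_gt0 f_inj fD)).
  move=> y yp; rewrite iter_subid_expn // (iter_brace_lambda braceB).
  by rewrite -(card_pgroup pB) cardsT (brace_bpow_card braceB) (brace_lambda1 braceB) subrr.
have a_p : bpow mul one a p = pth_power_sum p E a.
  by rewrite (bpow_sum_iter_lambda braceB) sum_iter_binomial.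
split; rewrite a_p -pth_power_sumMn //.
  by apply/eqP/(pth_power_sum_char (m := m)); rewrite // -mulrnA -expnSr.
by apply: (pth_power_sum_neq0 (m := m)); rewrite // -!mulrnA ?mulnA -!expnSr prednK.
Qed.
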